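(* Let $\gamma\ge1$, let $\mathcal{B}$ be a countably infinite subset of $\{z\in\mathbb{C}:\operatorname{Re}(z)\ge\gamma\}$, $\theta_b(z)=1/(z+b)$, and let $s>0$ with $\sum_{b\in\mathcal{B}}|b|^{-2s}<\infty$. Let $H\subset\mathbb{C}$ be a bounded, mildly regular open set with $H\supset G_\gamma=\{z:|z-1/(2\gamma)|<1/(2\gamma)\}$ and $\operatorname{Re}(z)>0$ on $H$. Let $L_s:C_{\mathbb{C}}(\bar H)\to C_{\mathbb{C}}(\bar H)$, $(L_sf)(z)=\sum_{b\in\mathcal{B}}|z+b|^{-2s}f(\theta_b(z))$, and let $v_s$ be a strictly positive continuous eigenfunction of $L_s$ on $\bar H$ (unique up to scalar multiples). For $R>2$ let $\mathcal{B}_R=\{b\in\mathcal{B}:|b|\le R\}$, $\mathcal{B}_R'=\{b\in\mathcal{B}:|b|>R\}$, and for $\alpha\ge0$ define $L_{s,R,\alpha}:C_{\mathbb{C}}(\bar H)\to C_{\mathbb{C}}(\bar H)$ by $$(L_{s,R,\alpha}f)(z)=\sum_{b\in\mathcal{B}_R}\frac{f(\theta_b(z))}{|z+b|^{2s}}+\alpha f(0).$$ Assume there exist $\delta_{s,R}>0$ and $\eta_{s,R}\ge0$ such that for all $z\in\bar H$ $$\eta_{s,R}v_s(0)\le\sum_{b\in\mathcal{B}_R'}\frac{1}{|z+b|^{2s}}v_s(\theta_b(z))\le\delta_{s,R}v_s(0).$$ Then, with $L_{s,R+}=L_{s,R,\delta_{s,R}}$ and $L_{s,R-}=L_{s,R,\eta_{s,R}}$,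 $$r(L_{s,R-})\le r(L_s)\le r(L_{s,R+}),$$ where $r$ denotes the spectral radius.
   Context: A bounded open set $H\subset\mathbb{R}^n$ is mildly regular if there exist $\eta>0$ and $M\ge1$ such that whenever $x,y\in H$ and $\|x-y\|<\eta$, there is a Lipschitz map $\psi:[0,1]\to H$ with $\psi(0)=x$, $\psi(1)=y$ and $\int_0^1\|\psi'(t)\|\,dt\le M\|x-y\|$. $C_{\mathbb{C}}(\bar H)$ is the space of continuous complex functions on $\bar H$ with sup norm; $r(L)=\lim_k\|L^k\|^{1/k}$. Note $0\in\bar H$. *)

From Stdlib Require Import Reals.
From Coquelicot Require Import Coquelicot.
From mathcomp Require Import all_boot all_algebra.
From mathcomp Require Import all_classical all_reals all_analysis.
From mathcomp Require Import Rstruct Rstruct_topology.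

Set Implicit Arguments.
Unset Strict Implicit.

Definition dnorm (psi : R -> C) (t : R) : R :=
  sqrt (Rsqr (Derive.Derive (fun u => fst (psi u)) t)
        + Rsqr (Derive.Derive (fun u => snd (psi u)) t)).

Local Open Scope ereal_scope.
Definition length_bound (psi : R -> C) (c : R) : Prop :=
  (\int[@lebesgue_measure R]_(t in `[0%R, 1%R]%classic) ((dnorm psi t)%:E))
    <= c%:E.
Local Close Scope ereal_scope.

Local Open Scope R_scope.

Definition mildly_regular (H : C -> Prop) : Prop :=
  exists (eta M : R), 0 < eta /\ 1 <= M /\
    forall x y : C, H x -> H y -> Cmod (Cminus x y) < eta ->
      exists psi : R -> C,
        (forall t, 0 <= t <= 1 -> H (psi t)) /\
        (exists K : R, forall t u, 0 <= t <= 1 -> 0 <= u <= 1 ->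
             Cmod (Cminus (psi t) (psi u)) <= K * Rabs (t - u)) /\
        psi 0 = x /\ psi 1 = y /\
        length_bound psi (M * Cmod (Cminus x y)).

Definition bounded_set (H : C -> Prop) : Prop :=
  exists M : R, forall z, H z -> Cmod z <= M.

Definition clos (H : C -> Prop) (z : C) : Prop :=
  forall eps : R, 0 < eps -> exists w, H w /\ Cmod (Cminus w z) < eps.

Definition supnorm (K : C -> Prop) (f : C -> C) : R :=
  real (Lub_Rbar (fun x => exists z, K z /\ x = Cmod (f z))).

Definition opnorm (K : C -> Prop) (L : (C -> C) -> (C -> C)) : R :=
  real (Lub_Rbar (fun x => exists f : C -> C,
     continuous_on K f /\ supnorm K f <= 1 /\ x = supnorm K (L f))).

Fixpoint opiter (k : nat) (L : (C -> C) -> (C -> C)) : (C -> C) -> (C -> C) :=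
  match k with
  | O => fun f => f
  | S k => fun f => L (opiter k L f)
  end.

Definition nroot (k : nat) (x : R) : R :=
  if Req_EM_T x 0 then 0 else Rpower x (/ INR k).

Definition spec_rad (K : C -> Prop) (L : (C -> C) -> (C -> C)) : R :=
  real (Lim_seq (fun k => nroot (S k) (opnorm K (opiter (S k) L)))).

Definition CSeries (a : nat -> C) : C :=
  (Series (fun n => fst (a n)), Series (fun n => snd (a n))).

Definition theta (b z : C) : C := Cinv (Cplus z b).

Definition wgt (s : R) (z b : C) : R := Rpower (Cmod (Cplus z b)) (- (2 * s)).

(* L_s f (z) = sum_{b in B} |z+b|^{-2s} f(theta_b z), B = range beta *)
Definition Ls (beta : nat -> C) (s : R) (f : C -> C) (z : C) : C :=
  CSeries (fun n => Cmult (RtoC (wgt s z (beta n))) (f (theta (beta n) z))).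

Definition LsRa (beta : nat -> C) (s Rad alpha : R) (f : C -> C) (z : C) : C :=
  Cplus
    (CSeries (fun n => if Rle_dec (Cmod (beta n)) Rad
                       then Cmult (RtoC (wgt s z (beta n))) (f (theta (beta n) z))
                       else RtoC 0))
    (Cmult (RtoC alpha) (f (RtoC 0))).

Definition tail_sum (beta : nat -> C) (s Rad : R) (v : C -> R) (z : C) : R :=
  Series (fun n => if Rlt_dec Rad (Cmod (beta n))
                   then wgt s z (beta n) * v (theta (beta n) z) else 0).

From Stdlib Require Import Reals Lra Lia.
From Coquelicot Require Import Coquelicot.
From Stdlib Require Import Classical IndefiniteDescription List FunctionalExtensionality.
Local Open Scope R_scope.

(* Write lam for the eigenvalue of v.  All three operators have the form
   L_{sel,al} f = (sum over the selected b of |z+b|^{-2s} f(theta_b z)) + al f(0),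
   which is positive.  For such an operator, bounds lo v <= L v <= hi v propagate to the
   iterates, and since v lies between two positive constants on the compact set cl H,
   ||L^k|| is squeezed between constant multiples of lo^k and hi^k; hence
   lo <= r(L) <= hi.  For L_s we get lo = hi = lam.  For L_{s,R,al},
   L v = lam v - (tail sum over B'_R) + al v(0), so the hypothesis on the tail gives
   L_{s,R,delta} v >= lam v and L_{s,R,eta} v <= lam v.  The series converge because
   theta_b maps cl H into the closed disc cl G_gamma, which lies in cl H, and there the
   weights are bounded by a fixed multiple of |b|^{-2s}. *)

Lemma Rabs_fst_le_Cmod (z : C) : Rabs (fst z) <= Cmod z.
Proof. exact (re_le_Cmod z). Qed.

Lemma Rabs_snd_le_Cmod (z : C) : Rabs (snd z) <= Cmod z.
Proof. pose proof (Rmax_Cmod z); pose proof (Rmax_r (Rabs (fst z)) (Rabs (snd z))); lra. Qed.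

Lemma Cmod_real (z : C) : snd z = 0 -> Cmod z = Rabs (fst z).
Proof. destruct z as [x y]; simpl; intros ->. apply Cmod_R. Qed.

Lemma Cmod_Cminus_le_Rabs (x y : C) :
  Cmod (Cminus x y) <= Rabs (fst x - fst y) + Rabs (snd x - snd y).
Proof.
set (a := fst x - fst y); set (b := snd x - snd y).
assert (Hab : 0 <= Rabs a + Rabs b) by (pose proof (Rabs_pos a); pose proof (Rabs_pos b); lra).
rewrite <- (sqrt_pow2 _ Hab). apply sqrt_le_1_alt.
change (a ^ 2 + b ^ 2 <= (Rabs a + Rabs b) ^ 2).
rewrite <- (pow2_abs a), <- (pow2_abs b).
pose proof (Rabs_pos a); pose proof (Rabs_pos b); nra.
Qed.

Lemma Cmod_sub_triangle (x y z : C) : Cmod (Cminus x z) <= Cmod (Cminus x y) + Cmod (Cminus y z).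
Proof.
replace (Cminus x z) with (Cplus (Cminus x y) (Cminus y z))
  by (apply injective_projections; simpl; ring).
apply Cmod_triangle.
Qed.

Lemma Cmod_Cminus_sym (x y : C) : Cmod (Cminus x y) = Cmod (Cminus y x).
Proof. unfold Cmod; f_equal; simpl; ring. Qed.

Section Closure.
Variable H : C -> Prop.

Lemma clos_Cmod_le : bounded_set H -> exists B, forall z, clos H z -> Cmod z <= B.
Proof.
intros [M HM]. exists (M + 1). intros z Hz.
destruct (Hz 1) as [w [Hw Hwz]]; [lra|].
pose proof (HM w Hw). pose proof (Cmod_triangle w (Cminus z w)) as Htri.
replace (Cplus w (Cminus z w)) with z in Htri by (apply injective_projections; simpl; ring).
rewrite Cmod_Cminus_sym in Htri. lra.
Qed.

Lemma not_clos_box (t : C) : ~ clos H t ->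
  exists e, 0 < e /\ forall x, clos H x ->
    ~ (Rabs (fst x - fst t) < e /\ Rabs (snd x - snd t) < e).
Proof.
intros Ht. apply not_all_ex_not in Ht as [eps Ht].
apply imply_to_and in Ht as [Heps Hfar].
exists (eps / 4); split; [lra|]. intros x Hx [Hx1 Hx2].
destruct (Hx (eps / 4)) as [w [Hw Hwx]]; [lra|].
apply Hfar. exists w; split; [exact Hw|].
pose proof (Cmod_sub_triangle w x t). pose proof (Cmod_Cminus_le_Rabs x t). lra.
Qed.

Hypothesis Hre : forall z, H z -> 0 < fst z.

Lemma clos_Re_ge0 (z : C) : clos H z -> 0 <= fst z.
Proof.
intros Hz. destruct (Rle_or_lt 0 (fst z)) as [Hle|Hlt]; [exact Hle|].
destruct (Hz (- fst z)) as [w [Hw Hwz]]; [lra|].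
pose proof (Hre w Hw). pose proof (Rabs_fst_le_Cmod (Cminus w z)).
pose proof (Rle_abs (fst (Cminus w z))). simpl in *. lra.
Qed.

End Closure.

Lemma clos_closed_ball (H : C -> Prop) (c : C) (r : R) (Hr : 0 < r)
  (Hball : forall z, Cmod (Cminus z c) < r -> H z) (w : C) :
  Cmod (Cminus w c) <= r -> clos H w.
Proof.
intros Hw eps Heps.
set (t := Rmin (1 / 2) (eps / (2 * r))).
assert (Ht : 0 < t <= 1 / 2 /\ t * r <= eps / 2).
{ split; [split; [apply Rmin_pos; [lra|apply Rdiv_lt_0_compat; lra]|apply Rmin_l]|].
  apply Rle_trans with (eps / (2 * r) * r); [apply Rmult_le_compat_r; [lra|apply Rmin_r]|].
  right; field; lra. }
pose proof (Cmod_ge_0 (Cminus w c)).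
exists (Cplus w (Cmult (RtoC t) (Cminus c w))). split.
- apply Hball.
  replace (Cminus (Cplus w (Cmult (RtoC t) (Cminus c w))) c)
    with (Cmult (RtoC (1 - t)) (Cminus w c)) by (apply injective_projections; simpl; ring).
  rewrite Cmod_mult, Cmod_R, Rabs_right by lra. nra.
- replace (Cminus (Cplus w (Cmult (RtoC t) (Cminus c w))) w)
    with (Cmult (RtoC (- t)) (Cminus w c)) by (apply injective_projections; simpl; ring).
  rewrite Cmod_mult, Cmod_R, Rabs_left by lra. nra.
Qed.

Lemma compact_finite_cover (K : C -> Prop) (B : R)
  (K_box : forall z, K z -> Rabs (fst z) <= B /\ Rabs (snd z) <= B)
  (K_closed : forall t, ~ K t -> exists e, 0 < e /\ forall x, K x ->
     ~ (Rabs (fst x - fst t) < e /\ Rabs (snd x - snd t) < e))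
  (P : C -> C -> Prop)
  (P_local : forall t, K t -> exists e, 0 < e /\ forall x, K x ->
     Rabs (fst x - fst t) < e -> Rabs (snd x - snd t) < e -> P t x) :
  exists l : list C, forall x, K x -> exists t, In t l /\ P t x.
Proof.
set (toC := fun t : Compactness.Tn 2 R => (fst t, fst (snd t)) : C).
assert (Hrad : forall t, exists d : posreal, forall x, K x ->
   Rabs (fst x - fst (toC t)) < d -> Rabs (snd x - snd (toC t)) < d -> P (toC t) x).
{ intros t. destruct (classic (K (toC t))) as [Kt|Kt].
  - destruct (P_local _ Kt) as [e [He HPe]]. now exists (mkposreal e He).
  - destruct (K_closed _ Kt) as [e [He Hsep]]. exists (mkposreal e He).
    intros x Kx h1 h2. exfalso. exact (Hsep x Kx (conj h1 h2)). }
apply functional_choice in Hrad as [delta Hdelta].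
pose proof (compactness_list 2 (-B, (-B, tt)) (B, (B, tt)) delta) as Hl.
apply NNPP in Hl as [l Hl].
exists (map toC l). intros x Kx.
destruct (K_box x Kx) as [Bx1 Bx2].
destruct (Hl (fst x, (snd x, tt))) as [[t1 [t2 []]] [Ht [_ [Hc1 [Hc2 _]]]]].
{ simpl. split; [apply Rabs_le_between; auto|split; [apply Rabs_le_between; auto|auto]]. }
exists (toC (t1, (t2, tt))). split; [now apply in_map|]. now apply Hdelta.
Qed.

Lemma list_Rabs_bound (g : C -> R) (l : list C) : exists B, forall t, In t l -> Rabs (g t) <= B.
Proof.
induction l as [|a l [B HB]].
- exists 0; simpl; tauto.
- exists (Rmax (Rabs (g a)) B). intros t [->|Ht].
  + apply Rmax_l.
  + eapply Rle_trans; [apply HB; auto|apply Rmax_r].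
Qed.

Section ContinuousOnClosure.
Variable H : C -> Prop.
Hypothesis Hbdd : bounded_set H.

Lemma clos_continuous_bounded (g : C -> R) : continuous_on (clos H) g ->
  exists B, forall x, clos H x -> Rabs (g x) <= B.
Proof.
intros Hg.
destruct (clos_Cmod_le H Hbdd) as [B HB].
destruct (compact_finite_cover (clos H) B) with (P := fun t x => Rabs (g x - g t) < 1)
  as [l Hl].
- intros z Hz. pose proof (HB z Hz).
  pose proof (Rabs_fst_le_Cmod z); pose proof (Rabs_snd_le_Cmod z). lra.
- apply not_clos_box.
- intros t Ht. destruct (Hg t Ht (fun y => Rabs (y - g t) < 1)) as [d Hd].
  { exists (mkposreal 1 Rlt_0_1). now intros y Hy. }
  exists d; split; [apply cond_pos|]. intros x Kx h1 h2. now apply (Hd x).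
- destruct (list_Rabs_bound g l) as [B' HB'].
  exists (B' + 1). intros x Kx. destruct (Hl x Kx) as [t [Ht Hxt]].
  pose proof (HB' t Ht). pose proof (Rabs_triang_inv (g x) (g t)). lra.
Qed.

Lemma clos_continuous_pos_lb (g : C -> R) : continuous_on (clos H) g ->
  (forall x, clos H x -> 0 < g x) -> exists m, 0 < m /\ forall x, clos H x -> m <= g x.
Proof.
intros Hg Hpos.
destruct (clos_continuous_bounded (fun x => / g x)) as [B HB].
{ intros x Hx. apply (filterlim_comp _ _ _ g Rinv _ (locally (g x))); [now apply Hg|].
  apply continuous_Rinv. specialize (Hpos x Hx). lra. }
exists (/ (Rabs B + 1)). split; [apply Rinv_0_lt_compat; pose proof (Rabs_pos B); lra|].
intros x Hx. specialize (Hpos x Hx). specialize (HB x Hx).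
rewrite Rabs_right in HB by (left; now apply Rinv_0_lt_compat).
rewrite <- (Rinv_inv (g x)). apply Rinv_le_contravar; [now apply Rinv_0_lt_compat|].
pose proof (Rle_abs B). lra.
Qed.

Lemma clos_continuous_Cmod_bounded (f : C -> C) : continuous_on (clos H) f ->
  exists B, forall x, clos H x -> Cmod (f x) <= B.
Proof.
intros Hf.
destruct (clos_continuous_bounded (fun x => Cmod (f x))) as [B HB].
- intros x Hx. apply (filterlim_comp _ _ _ f (@norm _ C_NormedModule) _ (locally (f x))).
  + now apply Hf.
  + exact (filterlim_norm (K := C_AbsRing) (V := C_NormedModule) (f x)).
- exists B. intros x Hx. specialize (HB x Hx). rewrite Rabs_right in HB; [lra|].
  apply Rle_ge, Cmod_ge_0.
Qed.

End ContinuousOnClosure.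

Lemma Cinv_closed_ball (gamma : R) (u : C) : 0 < gamma -> gamma <= fst u ->
  Cmod (Cminus (Cinv u) (RtoC (/ (2 * gamma)))) <= / (2 * gamma).
Proof.
intros Hgamma Hu.
set (c := / (2 * gamma)). set (p := fst u). set (q := snd u).
assert (Hc : 0 < c) by (unfold c; apply Rinv_0_lt_compat; lra).
assert (Hcp : 1 <= 2 * c * p) by (unfold c, p; apply (Rmult_le_reg_l (2 * gamma)); [lra|];
  field_simplify; lra).
assert (Hn : 0 < p ^ 2 + q ^ 2) by (unfold p in *; nra).
set (a := / (p ^ 2 + q ^ 2)).
assert (Ha : a * (p ^ 2 + q ^ 2) = 1) by (unfold a; field; lra).
assert (Hapos : 0 < a) by (unfold a; apply Rinv_0_lt_compat; lra).
apply Rle_trans with (sqrt (c ^ 2)); [|rewrite sqrt_pow2; lra].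
apply sqrt_le_1_alt.
(* |1/u - c|^2 = |u|^-2 (1 - 2 c Re u) + c^2, and 2 c Re u >= 1. *)
replace (fst (Cminus (Cinv u) (RtoC c)) ^ 2 + snd (Cminus (Cinv u) (RtoC c)) ^ 2)
  with (a * (a * (p ^ 2 + q ^ 2)) - 2 * c * p * a + c ^ 2)
  by (unfold Cminus, Cinv, Cplus, Copp, RtoC; cbn [fst snd]; unfold Rdiv; fold p q a; ring).
rewrite Ha. nra.
Qed.

Section Geometry.
Variables (gamma : R) (H : C -> Prop).
Hypothesis Hgamma : 0 < gamma.
Hypothesis HG : forall z, Cmod (Cminus z (RtoC (/ (2 * gamma)))) < / (2 * gamma) -> H z.
Hypothesis Hre : forall z, H z -> 0 < fst z.

Lemma theta_clos (b z : C) : gamma <= fst b -> clos H z -> clos H (theta b z).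
Proof.
intros Hb Hz. apply (clos_closed_ball H (RtoC (/ (2 * gamma))) (/ (2 * gamma))).
- apply Rinv_0_lt_compat; lra.
- exact HG.
- apply Cinv_closed_ball; [exact Hgamma|]. pose proof (clos_Re_ge0 H Hre z Hz). simpl. lra.
Qed.

Lemma zero_clos : clos H (RtoC 0).
Proof.
assert (Hc : 0 < / (2 * gamma)) by (apply Rinv_0_lt_compat; lra).
apply (clos_closed_ball H (RtoC (/ (2 * gamma))) (/ (2 * gamma)) Hc HG).
replace (Cminus (RtoC 0) (RtoC (/ (2 * gamma)))) with (RtoC (- / (2 * gamma)))
  by (apply injective_projections; simpl; ring).
rewrite Cmod_R, Rabs_Ropp, Rabs_right; lra.
Qed.

End Geometry.

Lemma wgt_le (s Mz : R) (z b : C) : 0 < s -> Cmod z <= Mz -> 0 <= fst z -> 1 <= fst b ->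
  0 <= wgt s z b <= Rpower (1 + Mz) (2 * s) * Rpower (Cmod b) (- (2 * s)).
Proof.
intros Hs HMz Hz Hb. unfold wgt.
assert (Hzb : 1 <= Cmod (Cplus z b)).
{ pose proof (Rabs_fst_le_Cmod (Cplus z b)). pose proof (Rle_abs (fst (Cplus z b))).
  simpl in *. lra. }
assert (Hbzb : Cmod b <= (1 + Mz) * Cmod (Cplus z b)).
{ pose proof (Cmod_triangle (Cplus z b) (Copp z)) as Htri. rewrite Cmod_opp in Htri.
  replace (Cplus (Cplus z b) (Copp z)) with b in Htri by (apply injective_projections; simpl; ring).
  pose proof (Cmod_ge_0 z). nra. }
assert (Hbpos : 0 < Cmod b).
{ pose proof (Rabs_fst_le_Cmod b). pose proof (Rle_abs (fst b)). lra. }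
assert (Hpow : Rpower (Cmod b) (2 * s)
               <= Rpower (1 + Mz) (2 * s) * Rpower (Cmod (Cplus z b)) (2 * s)).
{ pose proof (Cmod_ge_0 z).
  rewrite Rpower_mult_distr by lra. apply Rle_Rpower_l; lra. }
assert (Hpos : forall x, 0 < Rpower x (2 * s)) by (intros x; apply exp_pos).
split; [left; apply exp_pos|]. rewrite !Rpower_Ropp.
pose proof (Hpos (1 + Mz)); pose proof (Hpos (Cmod (Cplus z b))).
replace (/ Rpower (Cmod (Cplus z b)) (2 * s)) with (Rpower (1 + Mz) (2 * s)
  * / (Rpower (1 + Mz) (2 * s) * Rpower (Cmod (Cplus z b)) (2 * s))) by (field; lra).
apply Rmult_le_compat_l; [lra|]. apply Rinv_le_contravar; [apply Hpos|exact Hpow].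
Qed.

Lemma Series_ge0 (a : nat -> R) : (forall n, 0 <= a n) -> ex_series a -> 0 <= Series a.
Proof.
intros Ha Hex. rewrite <- (Rmult_0_l (Series a)), <- Series_scal_l.
apply Series_le; [|exact Hex]. intros n. rewrite Rmult_0_l. split; [lra|apply Ha].
Qed.

Lemma sum_n_le_Series (b : nat -> R) (n : nat) :
  (forall k, 0 <= b k) -> ex_series b -> sum_n b n <= Series b.
Proof.
intros Hb Hex. apply (is_lim_seq_incr_compare (sum_n b)); [exact (Series_correct _ Hex)|].
intros k. rewrite sum_Sn. specialize (Hb (S k)). unfold plus; simpl; lra.
Qed.

Lemma Cmod_CSeries_le (t : nat -> C) (b : nat -> R) :
  (forall n, Cmod (t n) <= b n) -> ex_series b -> Cmod (CSeries t) <= Series b.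
Proof.
intros Htb Hb.
assert (Hb0 : forall n, 0 <= b n) by (intros n; eapply Rle_trans; [apply Cmod_ge_0|apply Htb]).
assert (Hfst : ex_series (fun n => fst (t n))).
{ apply (ex_series_le (V := R_CompleteNormedModule) _ b); [|exact Hb]. intros n. unfold norm; simpl.
  eapply Rle_trans; [apply Rabs_fst_le_Cmod|apply Htb]. }
assert (Hsnd : ex_series (fun n => snd (t n))).
{ apply (ex_series_le (V := R_CompleteNormedModule) _ b); [|exact Hb]. intros n. unfold norm; simpl.
  eapply Rle_trans; [apply Rabs_snd_le_Cmod|apply Htb]. }
set (B := Series b).
set (P := fun n => (sum_n (fun k => fst (t k)) n, sum_n (fun k => snd (t k)) n) : C).
assert (HP : forall n, Cmod (P n) <= B).
{ intros n. eapply Rle_trans; [|exact (sum_n_le_Series b n Hb0 Hb)].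
  induction n as [|n IH].
  - unfold P. rewrite !sum_O, <- surjective_pairing. apply Htb.
  - rewrite sum_Sn. eapply Rle_trans; [|apply Rplus_le_compat; [exact IH|apply (Htb (S n))]].
    replace (P (S n)) with (Cplus (P n) (t (S n))); [apply Cmod_triangle|].
    unfold P. rewrite !sum_Sn. reflexivity. }
assert (HB : 0 <= B) by (eapply Rle_trans; [apply Cmod_ge_0|apply (HP O)]).
assert (Hlim : Rbar_le (fst (CSeries t) * fst (CSeries t) + snd (CSeries t) * snd (CSeries t))
                       (B * B)).
{ apply (is_lim_seq_le (fun n => fst (P n) * fst (P n) + snd (P n) * snd (P n)) (fun _ => B * B)).
  - intros n. pose proof (Cmod2_alt (P n)) as HPn. unfold Re, Im in HPn.
    pose proof (Rmult_le_compat _ _ _ _ (Cmod_ge_0 (P n)) (Cmod_ge_0 (P n)) (HP n) (HP n)).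
    nra.
  - assert (Hlim1 : is_lim_seq (fun n => fst (P n)) (fst (CSeries t)))
      by apply (Series_correct _ Hfst).
    assert (Hlim2 : is_lim_seq (fun n => snd (P n)) (snd (CSeries t)))
      by apply (Series_correct _ Hsnd).
    apply is_lim_seq_plus'; apply is_lim_seq_mult'; assumption.
  - apply is_lim_seq_const. }
simpl in Hlim. pose proof (Cmod2_alt (CSeries t)) as Ht. unfold Re, Im in Ht. simpl in Ht.
pose proof (Cmod_ge_0 (CSeries t)). nra.
Qed.

Lemma Rpower_pow_inv (x : R) (k : nat) : 0 < x -> Rpower (x ^ S k) (/ INR (S k)) = x.
Proof.
intros Hx. rewrite <- Rpower_pow, Rpower_mult by exact Hx.
rewrite Rinv_r; [apply Rpower_1, Hx|apply not_0_INR; lia].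
Qed.

Lemma nroot_le (c mu x : R) (k : nat) : 0 < c -> 0 <= mu -> 0 <= x <= c * mu ^ S k ->
  nroot (S k) x <= Rpower c (/ INR (S k)) * mu.
Proof.
intros Hc Hmu Hx. unfold nroot.
destruct (Rstruct.Req_EM_T x 0) as [Hx0|Hx0]; cbn [ssrbool.is_left].
- apply Rmult_le_pos; [left; apply exp_pos|exact Hmu].
- assert (Hmu0 : 0 < mu).
  { destruct Hmu as [Hlt|<-]; [exact Hlt|]. simpl in Hx. lra. }
  eapply Rle_trans.
  + apply Rle_Rpower_l; [left; apply Rinv_0_lt_compat, lt_0_INR; lia|split; [lra|apply Hx]].
  + rewrite <- Rpower_mult_distr, Rpower_pow_inv by (auto; apply pow_lt; auto). lra.
Qed.

Lemma le_nroot (c lam x : R) (k : nat) : 0 < c -> 0 <= lam -> c * lam ^ S k <= x ->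
  Rpower c (/ INR (S k)) * lam <= nroot (S k) x.
Proof.
intros Hc [Hlam|<-] Hx.
- assert (Hpos : 0 < c * lam ^ S k) by (apply Rmult_lt_0_compat; [exact Hc|apply pow_lt, Hlam]).
  unfold nroot. destruct (Rstruct.Req_EM_T x 0) as [Hx0|Hx0]; cbn [ssrbool.is_left]; [lra|].
  rewrite <- (Rpower_pow_inv lam k Hlam) at 1.
  rewrite Rpower_mult_distr by (auto; apply pow_lt; auto).
  apply Rle_Rpower_l; [left; apply Rinv_0_lt_compat, lt_0_INR; lia|lra].
- rewrite Rmult_0_r. unfold nroot.
  destruct (Rstruct.Req_EM_T x 0); cbn [ssrbool.is_left]; [lra|left; apply exp_pos].
Qed.

Lemma is_lim_seq_Rpower_inv_S (c a : R) : 0 < c ->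
  is_lim_seq (fun k => Rpower c (/ INR (S k)) * a) a.
Proof.
intros Hc.
assert (Hinv : is_lim_seq (fun k => / INR (S k) * ln c) (0 * ln c)).
{ apply (is_lim_seq_scal_r _ (ln c) 0).
  apply (is_lim_seq_incr_1 (fun k => / INR k) 0).
  replace (Finite 0) with (Rbar_inv p_infty) by reflexivity.
  apply is_lim_seq_inv; [apply is_lim_seq_INR|discriminate]. }
apply (is_lim_seq_continuous exp) in Hinv; [|apply derivable_continuous_pt, derivable_pt_exp].
rewrite Rmult_0_l, exp_0 in Hinv.
pose proof (is_lim_seq_scal_r _ a 1 Hinv) as Hlim. simpl in Hlim.
now rewrite Rmult_1_l in Hlim.
Qed.

Lemma Lim_seq_between (u lo hi : nat -> R) (l h : R) :
  (forall k, lo k <= u k <= hi k) -> is_lim_seq lo l -> is_lim_seq hi h ->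
  l <= real (Lim_seq u) <= h.
Proof.
intros Hu Hlo Hhi.
assert (Hl : Rbar_le l (Lim_seq u)).
{ rewrite <- (is_lim_seq_unique _ _ Hlo). apply Lim_seq_le_loc. exists O. intros; apply Hu. }
assert (Hh : Rbar_le (Lim_seq u) h).
{ rewrite <- (is_lim_seq_unique _ _ Hhi). apply Lim_seq_le_loc. exists O. intros; apply Hu. }
destruct (Lim_seq u); simpl in *; try contradiction. lra.
Qed.

Lemma Lub_Rbar_finite (E : R -> Prop) (x0 B : R) : E x0 -> (forall x, E x -> x <= B) ->
  (forall x, E x -> x <= real (Lub_Rbar E)) /\ real (Lub_Rbar E) <= B.
Proof.
intros Hx0 HB. destruct (Lub_Rbar_correct E) as [Hub Hlub].
destruct (Lub_Rbar E) as [l| |].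
- split; [exact Hub|exact (Hlub (Finite B) HB)].
- contradiction (Hlub (Finite B) HB).
- contradiction (Hub x0 Hx0).
Qed.

Lemma supnorm_spec (K : C -> Prop) (f : C -> C) (z0 : C) (B : R) :
  K z0 -> (forall z, K z -> Cmod (f z) <= B) ->
  (forall z, K z -> Cmod (f z) <= supnorm K f) /\ supnorm K f <= B.
Proof.
intros Hz0 HB. unfold supnorm.
destruct (Lub_Rbar_finite (fun x => exists z, K z /\ x = Cmod (f z)) (Cmod (f z0)) B)
  as [Hle Hsup].
- now exists z0.
- intros x [z [Hz ->]]. now apply HB.
- split; [|exact Hsup]. intros z Hz. apply Hle. now exists z.
Qed.

Section SpectralRadiusBounds.
Variables (K : C -> Prop) (z0 : C) (T : (C -> C) -> (C -> C)) (v : C -> R) (m M lam mu : R).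
Hypothesis K_z0 : K z0.
Hypothesis K_bounded :
  forall f : C -> C, continuous_on K f -> exists B, forall z, K z -> Cmod (f z) <= B.
Hypothesis Hm : 0 < m.
Hypothesis v_bounds : forall z, K z -> m <= v z <= M.
Hypothesis Hlam : 0 <= lam.
Hypothesis Hmu : 0 <= mu.
Hypothesis T_Cmod_le : forall (F : C -> C) c, 0 <= c -> (forall w, K w -> Cmod (F w) <= c * v w) ->
  forall z, K z -> Cmod (T F z) <= c * mu * v z.
Hypothesis T_real_ge : forall (F : C -> C) c d, 0 <= c ->
  (forall w, K w -> snd (F w) = 0 /\ c * v w <= fst (F w) <= d * v w) ->
  forall z, K z -> snd (T F z) = 0 /\ c * lam * v z <= fst (T F z).

Lemma opiter_Cmod_le (k : nat) (F : C -> C) (c : R) : 0 <= c ->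
  (forall w, K w -> Cmod (F w) <= c * v w) ->
  forall z, K z -> Cmod (opiter k T F z) <= c * mu ^ k * v z.
Proof.
intros Hc HF. induction k as [|k IH]; intros z Hz.
- rewrite Rmult_1_r. now apply HF.
- rewrite <- tech_pow_Rmult, (Rmult_comm mu), <- Rmult_assoc.
  apply T_Cmod_le; [apply Rmult_le_pos; [exact Hc|now apply pow_le]|exact IH|exact Hz].
Qed.

Lemma opiter_real_ge (k : nat) (F : C -> C) (c d : R) : 0 <= c ->
  (forall w, K w -> snd (F w) = 0 /\ c * v w <= fst (F w) <= d * v w) ->
  forall z, K z -> snd (opiter k T F z) = 0 /\ c * lam ^ k * v z <= fst (opiter k T F z).
Proof.
intros Hc HF.
assert (HFd : forall w, K w -> Cmod (F w) <= d * v w).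
{ intros w Hw. destruct (HF w Hw) as [Hsnd Hfst]. destruct (v_bounds w Hw).
  rewrite Cmod_real, Rabs_right by (exact Hsnd || nra). lra. }
assert (Hd : 0 <= d) by (destruct (HF z0 K_z0) as [_ ?]; destruct (v_bounds z0 K_z0); nra).
induction k as [|k IH]; intros z Hz.
- rewrite Rmult_1_r. destruct (HF z Hz) as [Hsnd [Hfst _]]. now split.
- rewrite <- tech_pow_Rmult, (Rmult_comm lam), <- Rmult_assoc.
  apply (T_real_ge (opiter k T F) _ (d * mu ^ k));
    [apply Rmult_le_pos; [exact Hc|now apply pow_le]| |exact Hz].
  intros w Hw. destruct (IH w Hw) as [Hsnd Hfst]. split; [exact Hsnd|split; [exact Hfst|]].
  pose proof (opiter_Cmod_le k F d Hd HFd w Hw).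
  pose proof (Rabs_fst_le_Cmod (opiter k T F w)). pose proof (Rle_abs (fst (opiter k T F w))). lra.
Qed.

(* The constant 1 lies between v/M and v/m, so it witnesses both bounds on the norms of T^k. *)
Let one : C -> C := fun _ => RtoC 1.

Lemma continuous_one : continuous_on K one.
Proof. intros x _. unfold one. apply filterlim_const. Qed.

Lemma supnorm_one_le : supnorm K one <= 1.
Proof.
apply (supnorm_spec K one z0 1 K_z0). intros z _. unfold one. rewrite Cmod_R, Rabs_R1. lra.
Qed.

Lemma opiter_one_ge (k : nat) : lam ^ k * v z0 / M <= Cmod (opiter k T one z0).
Proof.
destruct (v_bounds z0 K_z0).
eapply Rle_trans; [|eapply Rle_trans; [apply Rle_abs|apply Rabs_fst_le_Cmod]].
replace (lam ^ k * v z0 / M) with (/ M * lam ^ k * v z0) by (field; lra).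
apply (opiter_real_ge k one (/ M) (/ m)); [left; apply Rinv_0_lt_compat; lra| |exact K_z0].
intros w Hw. destruct (v_bounds w Hw). unfold one; simpl. split; [reflexivity|split].
- apply (Rmult_le_reg_l M); [lra|]. field_simplify; lra.
- apply (Rmult_le_reg_l m); [lra|]. field_simplify; lra.
Qed.

Lemma Cmod_opiter_le (k : nat) (f : C -> C) : continuous_on K f -> supnorm K f <= 1 ->
  forall z, K z -> Cmod (opiter k T f z) <= mu ^ k * M / m.
Proof.
intros Hf Hsup z Hz.
destruct (K_bounded f Hf) as [B HB]. destruct (supnorm_spec K f z0 B K_z0 HB) as [Hfsup _].
assert (Hfv : forall w, K w -> Cmod (f w) <= / m * v w).
{ intros w Hw. destruct (v_bounds w Hw). pose proof (Hfsup w Hw).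
  apply Rle_trans with 1; [lra|]. apply (Rmult_le_reg_l m); [exact Hm|]. field_simplify; lra. }
assert (Hm' : 0 <= / m) by (left; now apply Rinv_0_lt_compat).
eapply Rle_trans; [exact (opiter_Cmod_le k f (/ m) Hm' Hfv z Hz)|].
replace (mu ^ k * M / m) with (/ m * mu ^ k * M) by (field; lra).
apply Rmult_le_compat_l; [apply Rmult_le_pos; [exact Hm'|now apply pow_le]|apply v_bounds, Hz].
Qed.

Lemma opnorm_opiter_bounds (k : nat) :
  lam ^ k * v z0 / M <= opnorm K (opiter k T) <= mu ^ k * M / m.
Proof.
assert (Hone : exists f : C -> C, continuous_on K f /\ supnorm K f <= 1
                 /\ supnorm K (opiter k T one) = supnorm K (opiter k T f))
  by (exists one; repeat split; [exact continuous_one|exact supnorm_one_le]).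
destruct (Lub_Rbar_finite (fun x => exists f : C -> C,
     continuous_on K f /\ supnorm K f <= 1 /\ x = supnorm K (opiter k T f))
  (supnorm K (opiter k T one)) (mu ^ k * M / m) Hone) as [Hle Hsup].
{ intros x [f [Hf [Hfs ->]]].
  exact (proj2 (supnorm_spec K _ z0 _ K_z0 (Cmod_opiter_le k f Hf Hfs))). }
split; [|exact Hsup].
apply Rle_trans with (supnorm K (opiter k T one)); [|exact (Hle _ Hone)].
eapply Rle_trans; [apply opiter_one_ge|].
apply (supnorm_spec K _ z0 _ K_z0 (Cmod_opiter_le k one continuous_one supnorm_one_le)), K_z0.
Qed.

Lemma spec_rad_between : lam <= spec_rad K T <= mu.
Proof.
destruct (v_bounds z0 K_z0) as [Hvm HvM].
apply (Lim_seq_between _ (fun k => Rpower (v z0 / M) (/ INR (S k)) * lam)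
                         (fun k => Rpower (M / m) (/ INR (S k)) * mu)).
- intros k. destruct (opnorm_opiter_bounds (S k)) as [Hlo Hhi]. split.
  + apply le_nroot; [apply Rdiv_lt_0_compat; lra|exact Hlam|].
    replace (v z0 / M * lam ^ S k) with (lam ^ S k * v z0 / M) by (field; lra). exact Hlo.
  + apply nroot_le; [apply Rdiv_lt_0_compat; lra|exact Hmu|]. split.
    * eapply Rle_trans; [|exact Hlo].
      apply Rmult_le_pos; [apply Rmult_le_pos; [now apply pow_le|lra]|].
      left; apply Rinv_0_lt_compat; lra.
    * replace (M / m * mu ^ S k) with (mu ^ S k * M / m) by (field; lra). exact Hhi.
- apply is_lim_seq_Rpower_inv_S, Rdiv_lt_0_compat; lra.
- apply is_lim_seq_Rpower_inv_S, Rdiv_lt_0_compat; lra.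
Qed.

End SpectralRadiusBounds.

(* [Lsel beta s sel al] sums the branches [b = beta n] with [sel n] and adds an atom of mass [al]
   at [0]: all [n] with [al = 0] gives [L_s], [|beta n| <= R] gives [L_{s,R,al}]. *)
Definition Lsel (beta : nat -> C) (s : R) (sel : nat -> bool) (al : R) (f : C -> C) (z : C) : C :=
  Cplus
    (CSeries (fun n => if sel n
                       then Cmult (RtoC (wgt s z (beta n))) (f (theta (beta n) z))
                       else RtoC 0))
    (Cmult (RtoC al) (f (RtoC 0))).

Definition Lsel_real (beta : nat -> C) (s : R) (sel : nat -> bool) (al : R) (g : C -> R) (z : C)
  : R :=
  Series (fun n => if sel n then wgt s z (beta n) * g (theta (beta n) z) else 0)
  + al * g (RtoC 0).

Lemma Lsel_real_none (beta : nat -> C) (s : R) (g : C -> R) (z : C) :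
  Lsel_real beta s (fun _ => false) 0 g z = 0.
Proof.
unfold Lsel_real. rewrite (Series_ext _ (fun _ => 0 * 0)), Series_scal_l by (intros; ring). ring.
Qed.

Section SelectedSums.
Variables (K : C -> Prop) (beta : nat -> C) (s : R) (W : nat -> R) (v : C -> R) (M : R).
Hypothesis K_theta : forall z n, K z -> K (theta (beta n) z).
Hypothesis K_0 : K (RtoC 0).
Hypothesis wgt_W : forall z n, K z -> 0 <= wgt s z (beta n) <= W n.
Hypothesis W_summable : ex_series W.
Hypothesis v_bounds : forall z, K z -> 0 <= v z <= M.

Lemma ex_series_sel (sel : nat -> bool) (g : C -> R) (B : R) :
  (forall w, K w -> Rabs (g w) <= B) ->
  forall z, K z ->
  ex_series (fun n => if sel n then wgt s z (beta n) * g (theta (beta n) z) else 0).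
Proof.
intros Hg z Hz. apply (ex_series_le (V := R_CompleteNormedModule) _ (fun n => B * W n));
  [|exact (ex_series_scal_l B W W_summable)].
intros n.
enough (Hn : Rabs (if sel n then wgt s z (beta n) * g (theta (beta n) z) else 0) <= B * W n)
  by exact Hn.
destruct (wgt_W z n Hz). pose proof (Hg _ K_0). pose proof (Rabs_pos (g (RtoC 0))).
destruct (sel n).
- rewrite Rabs_mult, Rabs_right by lra. pose proof (Hg _ (K_theta z n Hz)).
  pose proof (Rabs_pos (g (theta (beta n) z))). nra.
- rewrite Rabs_R0. nra.
Qed.

Lemma ex_series_sel_v (sel : nat -> bool) (z : C) : K z ->
  ex_series (fun n => if sel n then wgt s z (beta n) * v (theta (beta n) z) else 0).
Proof.
apply (ex_series_sel sel v M). intros w Hw. destruct (v_bounds w Hw). rewrite Rabs_right; lra.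
Qed.

Lemma Lsel_real_v_ge0 (sel : nat -> bool) (al : R) (z : C) : 0 <= al -> K z ->
  0 <= Lsel_real beta s sel al v z.
Proof.
intros Hal Hz. unfold Lsel_real. destruct (v_bounds _ K_0).
apply Rplus_le_le_0_compat; [|nra].
apply Series_ge0; [|exact (ex_series_sel_v sel z Hz)].
intros n. destruct (sel n); [|lra].
destruct (wgt_W z n Hz). destruct (v_bounds _ (K_theta z n Hz)). nra.
Qed.

Lemma Lsel_Cmod_le (sel : nat -> bool) (al c : R) (F : C -> C) : 0 <= al -> 0 <= c ->
  (forall w, K w -> Cmod (F w) <= c * v w) ->
  forall z, K z -> Cmod (Lsel beta s sel al F z) <= c * Lsel_real beta s sel al v z.
Proof.
intros Hal Hc HF z Hz. unfold Lsel, Lsel_real.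
eapply Rle_trans; [apply Cmod_triangle|].
rewrite Cmod_mult, Cmod_R, Rabs_right, Rmult_plus_distr_l by lra.
apply Rplus_le_compat; [|pose proof (HF _ K_0); nra].
rewrite <- Series_scal_l. apply Cmod_CSeries_le.
- intros n. destruct (sel n).
  + rewrite Cmod_mult, Cmod_R. destruct (wgt_W z n Hz). rewrite Rabs_right by lra.
    pose proof (HF _ (K_theta z n Hz)). pose proof (Cmod_ge_0 (F (theta (beta n) z))). nra.
  + rewrite Cmod_R, Rabs_R0. lra.
- exact (ex_series_scal_l c _ (ex_series_sel_v sel z Hz)).
Qed.

Lemma Lsel_real_ge (sel : nat -> bool) (al c d : R) (F : C -> C) : 0 <= al -> 0 <= c ->
  (forall w, K w -> snd (F w) = 0 /\ c * v w <= fst (F w) <= d * v w) ->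
  forall z, K z ->
    snd (Lsel beta s sel al F z) = 0
    /\ c * Lsel_real beta s sel al v z <= fst (Lsel beta s sel al F z).
Proof.
intros Hal Hc HF z Hz. destruct (HF _ K_0) as [Hsnd0 [Hlo0 _]].
unfold Lsel, Lsel_real, CSeries; simpl. rewrite Hsnd0. split.
- rewrite (Series_ext _ (fun n => 0 * 0)), Series_scal_l; [ring|].
  intros n. destruct (sel n); simpl; [|ring]. rewrite (proj1 (HF _ (K_theta z n Hz))). ring.
- rewrite Rmult_plus_distr_l. apply Rplus_le_compat; [|nra].
  rewrite <- Series_scal_l.
  rewrite (Series_ext (fun n => fst _)
    (fun n => if sel n then wgt s z (beta n) * fst (F (theta (beta n) z)) else 0))
    by (intros n; destruct (sel n); simpl; ring).
  apply Series_le.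
  + intros n. destruct (sel n); [|lra]. destruct (wgt_W z n Hz).
    destruct (HF _ (K_theta z n Hz)) as [_ [Hlo _]]. destruct (v_bounds _ (K_theta z n Hz)).
    split; [apply Rmult_le_pos; [lra|apply Rmult_le_pos; lra]|nra].
  + apply (ex_series_sel sel (fun w => fst (F w)) (Rabs d * M)); [|exact Hz].
    intros w Hw. destruct (HF w Hw) as [_ [Hlo Hhi]]. destruct (v_bounds w Hw).
    pose proof (Rle_abs d). pose proof (Rabs_pos d). rewrite Rabs_right by nra. nra.
Qed.

Variables (m lam : R).
Hypothesis Hm : 0 < m.
Hypothesis v_lb : forall z, K z -> m <= v z.
Hypothesis K_bounded :
  forall f : C -> C, continuous_on K f -> exists B, forall z, K z -> Cmod (f z) <= B.
Hypothesis v_eigen : forall z, K z -> Lsel_real beta s (fun _ => true) 0 v z = lam * v z.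

Lemma spec_rad_Lsel_between (sel : nat -> bool) (al lo hi : R) :
  0 <= al -> 0 <= lo -> 0 <= hi ->
  (forall z, K z -> lo * v z <= Lsel_real beta s sel al v z <= hi * v z) ->
  lo <= spec_rad K (Lsel beta s sel al) <= hi.
Proof.
intros Hal Hlo Hhi Hv.
apply (spec_rad_between K (RtoC 0) _ v m M); auto.
- intros z Hz. split; [apply v_lb|apply v_bounds]; exact Hz.
- intros F c Hc HF z Hz. rewrite Rmult_assoc.
  eapply Rle_trans; [exact (Lsel_Cmod_le sel al c F Hal Hc HF z Hz)|].
  apply Rmult_le_compat_l; [exact Hc|apply Hv, Hz].
- intros F c d Hc HF z Hz. destruct (Lsel_real_ge sel al c d F Hal Hc HF z Hz) as [Hsnd Hfst].
  split; [exact Hsnd|]. rewrite Rmult_assoc. eapply Rle_trans; [|exact Hfst].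
  apply Rmult_le_compat_l; [exact Hc|apply Hv, Hz].
Qed.

Lemma Lsel_real_add_compl (sel : nat -> bool) (al : R) (z : C) : K z ->
  Lsel_real beta s sel al v z + Lsel_real beta s (fun n => negb (sel n)) 0 v z
  = lam * v z + al * v (RtoC 0).
Proof.
intros Hz. rewrite <- v_eigen by exact Hz. unfold Lsel_real. cbn beta iota.
rewrite (Series_ext (fun n => wgt s z (beta n) * v (theta (beta n) z))
  (fun n => (if sel n then wgt s z (beta n) * v (theta (beta n) z) else 0)
          + (if negb (sel n) then wgt s z (beta n) * v (theta (beta n) z) else 0)))
  by (intros n; destruct (sel n); simpl; ring).
rewrite Series_plus by apply (ex_series_sel_v _ z Hz). ring.
Qed.

Lemma eigenvalue_ge0 : 0 <= lam.
Proof.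
pose proof (Lsel_real_v_ge0 (fun _ => true) 0 (RtoC 0) (Rle_refl 0) K_0) as Hge.
rewrite v_eigen in Hge by exact K_0. pose proof (v_lb _ K_0).
destruct (Rle_or_lt 0 lam); [assumption|nra].
Qed.

Lemma spec_rad_Lsel_ge (sel : nat -> bool) (al : R) : 0 <= al ->
  (forall z, K z -> Lsel_real beta s (fun n => negb (sel n)) 0 v z <= al * v (RtoC 0)) ->
  lam <= spec_rad K (Lsel beta s sel al).
Proof.
intros Hal Htail. pose proof eigenvalue_ge0. destruct (v_bounds _ K_0).
apply (spec_rad_Lsel_between sel al lam (lam + al * M / m)); auto.
- apply Rplus_le_le_0_compat; [lra|]. apply Rmult_le_pos; [nra|left; now apply Rinv_0_lt_compat].
- intros z Hz. pose proof (Lsel_real_add_compl sel al z Hz). pose proof (Htail z Hz).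
  pose proof (Lsel_real_v_ge0 (fun n => negb (sel n)) 0 z (Rle_refl 0) Hz).
  pose proof (v_lb z Hz). split; [lra|].
  assert (al * v (RtoC 0) <= al * M / m * v z); [|nra].
  replace (al * M / m * v z) with (al * M * (v z / m)) by (field; lra).
  assert (1 <= v z / m) by (apply (Rmult_le_reg_l m); [lra|]; field_simplify; lra).
  apply Rle_trans with (al * M * 1); [nra|]. apply Rmult_le_compat_l; [nra|lra].
Qed.

Lemma spec_rad_Lsel_le (sel : nat -> bool) (al : R) : 0 <= al ->
  (forall z, K z -> al * v (RtoC 0) <= Lsel_real beta s (fun n => negb (sel n)) 0 v z) ->
  spec_rad K (Lsel beta s sel al) <= lam.
Proof.
intros Hal Htail. pose proof eigenvalue_ge0.
apply (spec_rad_Lsel_between sel al 0 lam); auto; [lra|].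
intros z Hz. pose proof (Lsel_real_add_compl sel al z Hz). pose proof (Htail z Hz).
pose proof (Lsel_real_v_ge0 sel al z Hal Hz). lra.
Qed.

Lemma spec_rad_truncation_bounds (sel : nat -> bool) (lo hi : R) : 0 <= lo -> 0 <= hi ->
  (forall z, K z -> lo * v (RtoC 0) <= Lsel_real beta s (fun n => negb (sel n)) 0 v z
                  <= hi * v (RtoC 0)) ->
  spec_rad K (Lsel beta s sel lo) <= spec_rad K (Lsel beta s (fun _ => true) 0)
  /\ spec_rad K (Lsel beta s (fun _ => true) 0) <= spec_rad K (Lsel beta s sel hi).
Proof.
intros Hlo Hhi Htail.
assert (Hall : spec_rad K (Lsel beta s (fun _ => true) 0) = lam).
{ apply Rle_antisym; [apply spec_rad_Lsel_le|apply spec_rad_Lsel_ge]; try lra;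
    intros z _; rewrite Lsel_real_none; lra. }
rewrite Hall. split.
- apply spec_rad_Lsel_le; [exact Hlo|]. intros z Hz. apply Htail, Hz.
- apply spec_rad_Lsel_ge; [exact Hhi|]. intros z Hz. apply Htail, Hz.
Qed.

End SelectedSums.

Definition sel_le (beta : nat -> C) (Rad : R) (n : nat) : bool :=
  ssrbool.is_left (Rle_dec (Cmod (beta n)) Rad).

Lemma Ls_eq_Lsel (beta : nat -> C) (s : R) : Ls beta s = Lsel beta s (fun _ => true) 0.
Proof.
apply functional_extensionality; intro f; apply functional_extensionality; intro z.
unfold Lsel, Ls. cbn beta iota. apply injective_projections; simpl; ring.
Qed.

Lemma LsRa_eq_Lsel (beta : nat -> C) (s Rad al : R) :
  LsRa beta s Rad al = Lsel beta s (sel_le beta Rad) al.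
Proof.
apply functional_extensionality; intro f; apply functional_extensionality; intro z.
reflexivity.
Qed.

Lemma tail_sum_eq_Lsel_real (beta : nat -> C) (s Rad : R) (v : C -> R) (z : C) :
  tail_sum beta s Rad v z = Lsel_real beta s (fun n => negb (sel_le beta Rad n)) 0 v z.
Proof.
unfold tail_sum, Lsel_real, sel_le. rewrite Rmult_0_l, Rplus_0_r. apply Series_ext; intro n.
destruct (Rlt_dec Rad (Cmod (beta n))), (Rle_dec (Cmod (beta n)) Rad); simpl; lra.
Qed.

Lemma fst_Ls_real (beta : nat -> C) (s : R) (g : C -> R) (z : C) :
  fst (Ls beta s (fun w => RtoC (g w)) z) = Lsel_real beta s (fun _ => true) 0 g z.
Proof.
unfold Ls, Lsel_real, CSeries; simpl.
rewrite (Series_ext _ (fun n => wgt s z (beta n) * g (theta (beta n) z))) by (intros n; ring).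
ring.
Qed.

Theorem theorem5p11
  (gamma : R) (beta : nat -> C) (s : R) (H : C -> Prop) (v : C -> R)
  (Rad delta eta : R)
  (Hgamma : 1 <= gamma)
  (Hinj : forall m n, beta m = beta n -> m = n)
  (HB : forall n, gamma <= fst (beta n))
  (Hs : 0 < s)
  (Hsum : ex_series (fun n => Rpower (Cmod (beta n)) (- (2 * s))))
  (Hopen : open H) (Hbdd : bounded_set H) (Hmr : mildly_regular H)
  (HG : forall z : C, Cmod (Cminus z (RtoC (/ (2 * gamma)))) < / (2 * gamma) -> H z)
  (Hre : forall z, H z -> 0 < fst z)
  (Hvc : continuous_on (clos H) v)
  (Hvpos : forall z, clos H z -> 0 < v z)
  (Hveig : exists lam : C, forall z, clos H z ->
       Ls beta s (fun w => RtoC (v w)) z = Cmult lam (RtoC (v z)))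
  (HR : 2 < Rad) (Hdelta : 0 < delta) (Heta : 0 <= eta)
  (Htail : forall z, clos H z ->
       eta * v (RtoC 0) <= tail_sum beta s Rad v z <= delta * v (RtoC 0)) :
  spec_rad (clos H) (LsRa beta s Rad eta) <= spec_rad (clos H) (Ls beta s)
  /\ spec_rad (clos H) (Ls beta s) <= spec_rad (clos H) (LsRa beta s Rad delta).
Proof.
assert (Hgamma0 : 0 < gamma) by lra.
assert (K_theta : forall z n, clos H z -> clos H (theta (beta n) z))
  by (intros z n; apply (theta_clos gamma H Hgamma0 HG Hre), HB).
destruct (clos_Cmod_le H Hbdd) as [Mz HMz].
set (W := fun n => Rpower (1 + Mz) (2 * s) * Rpower (Cmod (beta n)) (- (2 * s))).
assert (wgt_W : forall z n, clos H z -> 0 <= wgt s z (beta n) <= W n).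
{ intros z n Hz. apply wgt_le; [exact Hs|exact (HMz z Hz)|exact (clos_Re_ge0 H Hre z Hz)|].
  pose proof (HB n); lra. }
destruct (clos_continuous_bounded H Hbdd v Hvc) as [M HM].
destruct (clos_continuous_pos_lb H Hbdd v Hvc Hvpos) as [m [Hm Hvm]].
assert (v_bounds : forall z, clos H z -> 0 <= v z <= M).
{ intros z Hz. pose proof (Hvpos z Hz). pose proof (HM z Hz). pose proof (Rle_abs (v z)). lra. }
destruct Hveig as [lam Hlam].
(* v and the weights are real, so only the real part of the eigenvalue enters. *)
assert (v_eigen : forall z, clos H z -> Lsel_real beta s (fun _ => true) 0 v z = fst lam * v z).
{ intros z Hz. rewrite <- fst_Ls_real, (Hlam z Hz). simpl. ring. }
rewrite Ls_eq_Lsel, !LsRa_eq_Lsel.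
apply (spec_rad_truncation_bounds (clos H) beta s W v M K_theta (zero_clos gamma H Hgamma0 HG)
  wgt_W (ex_series_scal_l _ _ Hsum) v_bounds m (fst lam) Hm Hvm
  (clos_continuous_Cmod_bounded H Hbdd) v_eigen); [lra|lra|].
intros z Hz. rewrite <- tail_sum_eq_Lsel_real. now apply Htail.
Qed.
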